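(* Let $\Gamma$ be a Veldkamp $n$-gon ($n\ge 2$). Then for every two edges $e_1,e_2$ of $\Gamma$ there exists an edge of $\Gamma$ that is opposite both $e_1$ and $e_2$. Consequently, for any two vertices $u,v$ with ${\rm dist}(u,v)$ even, $u^{\rm op}\cap v^{\rm op}\neq\emptyset$.
   Context: A graph is a pair $(V,E)$ with $E$ a set of $2$-element subsets of $V$; $\Gamma_v$ is the set of neighbors of $v$. An $s$-path is a sequence $(x_0,\dots,x_s)$ of vertices with consecutive vertices adjacent and $x_{i-2}\ne x_i$ for $i\in[2,s]$; ${\rm dist}$ is graph distance. A closed $s$-path is an $s$-path with $s\ge3$ whose first and last vertices coincide; an $s$-circuit is the subgraph determined by a closed $s$-path. An opposition relation on a set $X$ is a symmetric anti-reflexive relation; it is $k$-plump if for every $S\subseteq X$ with $|S|\le k$ some element of $X$ is related to all elements of $S$. A Veldkamp graph is a graph with a $2$-plump opposition relation $\equiv_v$ on $\Gamma_v$ for each vertex $v$. A path $(v_0,\dots,v_s)$ is straight if $v_{i-1}\equiv_{v_i}v_{i+1}$ for all $i\in[1,s-1]$; a circuit is straight if every path in it is straight. A Veldkamp $n$-gon ($n\ge2$) is a Veldkamp graph satisfying (VP1) connected and bipartite; (VP2) for each $k\in[1,n-1]$ each straight $k$-path is the unique straight path between its endpoints of length at most $k$; (VP3) every straight $(n+1)$-path lies in a straight $2n$-circuit. A root is a straight $n$-path. Two vertices $x,y$ are opposite if there is a root from $x$ to $y$; $x^{\rm op}$ denotes the set of vertices opposite $x$. Two edges $e,f$ are opposite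 if there is a straight $(n+1)$-path whose first edge is $e$ and whose last edge is $f$. *)

(* Sequences of vertices
   (x_0,...,x_s) are represented by a function p : nat -> V together with
   the length s (only p 0, ..., p s matter). *)
From Stdlib Require Import Arith List.
Import ListNotations.

Section Veldkamp.
Variable V : Type.
Variable adj : V -> V -> Prop.
(* opp v a b  means  a ≡_v b  (opposition relation on Γ_v) *)
Variable opp : V -> V -> V -> Prop.

Definition simple_graph : Prop :=
  (forall x y, adj x y -> adj y x) /\ (forall x, ~ adj x x).

Definition opposition_on_nbhd (v : V) : Prop :=
  (forall a b, opp v a b -> adj v a /\ adj v b) /\
  (forall a b, opp v a b -> opp v b a) /\
  (forall a, ~ opp v a a).

Definition plump (k : nat) (v : V) : Prop :=
  forall S : list V, length S <= k -> (forall a, In a S -> adj v a) ->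
    exists x, adj v x /\ forall a, In a S -> opp v x a.

Definition veldkamp_graph : Prop :=
  simple_graph /\ forall v, opposition_on_nbhd v /\ plump 2 v.

Definition walk (s : nat) (p : nat -> V) : Prop :=
  forall i, i < s -> adj (p i) (p (S i)).

Definition is_path (s : nat) (p : nat -> V) : Prop :=
  walk s p /\ forall i, 2 <= i <= s -> p (i - 2) <> p i.

Definition straight_cond (s : nat) (p : nat -> V) : Prop :=
  forall i, 1 <= i <= s - 1 -> opp (p i) (p (i - 1)) (p (S i)).

Definition straight_path (s : nat) (p : nat -> V) : Prop :=
  is_path s p /\ straight_cond s p.

Definition closed_path (m : nat) (c : nat -> V) : Prop :=
  is_path m c /\ 3 <= m /\ c 0 = c m.

Definition circ_vertex (m : nat) (c : nat -> V) (x : V) : Prop :=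
  exists i, i <= m /\ c i = x.
Definition circ_edge (m : nat) (c : nat -> V) (x y : V) : Prop :=
  exists i, i < m /\ ((c i = x /\ c (S i) = y) \/ (c i = y /\ c (S i) = x)).

Definition path_in_circuit (m : nat) (c : nat -> V) (s : nat) (p : nat -> V)
  : Prop :=
  (forall i, i <= s -> circ_vertex m c (p i)) /\
  (forall i, i < s -> circ_edge m c (p i) (p (S i))).

Definition straight_circuit (m : nat) (c : nat -> V) : Prop :=
  closed_path m c /\
  forall s p, is_path s p -> path_in_circuit m c s p -> straight_cond s p.

Definition connected : Prop :=
  forall u v, exists s p, walk s p /\ p 0 = u /\ p s = v.

Definition bipartite : Prop :=
  exists col : V -> bool, forall x y, adj x y -> col x <> col y.

Definition is_dist (u v : V) (d : nat) : Prop :=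
  (exists p, walk d p /\ p 0 = u /\ p d = v) /\
  (forall s p, walk s p -> p 0 = u -> p s = v -> d <= s).

Definition VP2 (n : nat) : Prop :=
  forall k, 1 <= k <= n - 1 ->
  forall p, straight_path k p ->
  forall j q, j <= k -> straight_path j q -> q 0 = p 0 -> q j = p k ->
    j = k /\ forall i, i <= k -> q i = p i.

Definition VP3 (n : nat) : Prop :=
  forall p, straight_path (S n) p ->
    exists c, straight_circuit (2 * n) c /\ path_in_circuit (2 * n) c (S n) p.

Definition veldkamp_ngon (n : nat) : Prop :=
  2 <= n /\ veldkamp_graph /\ connected /\ bipartite /\ VP2 n /\ VP3 n.

Definition opposite_vertices (n : nat) (x y : V) : Prop :=
  exists p, straight_path n p /\ p 0 = x /\ p n = y.

(* an edge is given by an (unordered) adjacent pair {a, b} *)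
Definition same_edge (a b x y : V) : Prop :=
  (a = x /\ b = y) \/ (a = y /\ b = x).

Definition opposite_edges (n : nat) (a b c d : V) : Prop :=
  exists p, straight_path (S n) p /\ same_edge a b (p 0) (p 1) /\
            same_edge c d (p n) (p (S n)).

End Veldkamp.

(* Write "u opposite z" when some root (straight n-path) joins
   them.  Everything rests on one consequence of (VP2)+(VP3), [root_around]:
   a straight (n+1)-path P lies in a straight 2n-circuit, whose vertices are
   pairwise distinct by (VP2); reading the circuit backwards from P 1 gives a
   root from P 1 to P (n+1) whose second vertex is P 0.  Combined with
   2-plumpness this lets us
   - rotate the second vertex of a root with fixed endpoints ([root_turn],
     [root_second_vertex]);
   - move one end of a pair of vertices with a common opposite two steps
     along a path ([common_opposite_step]); by induction, the ends of every
     walk of even length have a common opposite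
     ([even_walk_common_opposite]), which is the vertex statement;
   - extend two roots ending in a common vertex by a common last edge, which
     turns a common opposite vertex of a1 and a2 into a common opposite edge
     of the edges {a1,b1} and {a2,b2} ([common_opposite_edge]).
   Connectivity yields an even walk from a1 to an endpoint of the second
   edge, which gives the edge statement. *)

From Stdlib Require Import Arith Lia List.
Import ListNotations.

Lemma mod_add_compat N a b t :
  a mod N = b mod N -> (a + t) mod N = (b + t) mod N.
Proof. intros E. rewrite (Nat.Div0.add_mod a), (Nat.Div0.add_mod b), E. reflexivity. Qed.

Lemma mod_succ_cancel N a b :
  0 < N -> S a mod N = S b mod N -> a mod N = b mod N.
Proof.
  intros HN E. apply (mod_add_compat _ _ _ (N - 1)) in E.
  replace (S a + (N - 1)) with (a + 1 * N) in E by lia.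
  replace (S b + (N - 1)) with (b + 1 * N) in E by lia.
  rewrite !Nat.Div0.mod_add in E. exact E.
Qed.

Lemma mod_shift_neq N t d : 0 < d < N -> t mod N <> (t + d) mod N.
Proof.
  intros Hd E. pose proof (Nat.div_mod_eq t N). pose proof (Nat.div_mod_eq (t + d) N).
  destruct (Nat.le_gt_cases ((t + d) / N) (t / N)); nia.
Qed.

Section Veldkamp.
Variable V : Type.
Variable adj : V -> V -> Prop.
Variable opp : V -> V -> V -> Prop.
Hypothesis HG : veldkamp_graph V adj opp.

Lemma adj_sym x y : adj x y -> adj y x.
Proof. exact (proj1 (proj1 HG) x y). Qed.

Lemma adj_irrefl x : ~ adj x x.
Proof. exact (proj2 (proj1 HG) x). Qed.

Lemma opp_adj v a b : opp v a b -> adj v a /\ adj v b.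
Proof. exact (proj1 (proj1 (proj2 HG v)) a b). Qed.

Lemma opp_sym v a b : opp v a b -> opp v b a.
Proof. exact (proj1 (proj2 (proj1 (proj2 HG v))) a b). Qed.

Lemma opp_irrefl v a : ~ opp v a a.
Proof. exact (proj2 (proj2 (proj1 (proj2 HG v))) a). Qed.

Lemma exists_neighbour v : exists x, adj v x.
Proof.
  destruct (proj2 (proj2 HG v) []) as [x [Hx _]]; [simpl; lia | intros a [] |].
  exists x; exact Hx.
Qed.

Lemma common_opposite_neighbour v a b :
  adj v a -> adj v b -> exists x, adj v x /\ opp v x a /\ opp v x b.
Proof.
  intros Ha Hb.
  destruct (proj2 (proj2 HG v) [a; b]) as [x [Hx Hopp]]; [simpl; lia | |].
  - intros y [<- | [<- | []]]; assumption.
  - exists x. split; [exact Hx | split; apply Hopp; simpl; auto].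
Qed.

(* A straight walk: the index-friendly form of a straight path; the
   condition x_{i-2} <> x_i follows from irreflexivity of opposition. *)
Definition straight_walk (s : nat) (p : nat -> V) : Prop :=
  (forall i, i < s -> adj (p i) (p (S i))) /\
  (forall i, S i < s -> opp (p (S i)) (p i) (p (S (S i)))).

Lemma straight_walk_no_backtrack s p :
  straight_walk s p -> forall i, S (S i) <= s -> p i <> p (S (S i)).
Proof.
  intros [_ Hopp] i Hi E. apply (opp_irrefl (p (S i)) (p i)).
  rewrite E at 2. apply Hopp. lia.
Qed.

Lemma straight_walk_path s p : straight_walk s p -> straight_path V adj opp s p.
Proof.
  intros Hs. pose proof (straight_walk_no_backtrack s p Hs) as Hnb.
  destruct Hs as [Hadj Hopp]. split; [split|].
  - exact Hadj.
  - intros i Hi. replace i with (S (S (i - 2))) at 2 by lia. apply Hnb. lia.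
  - intros i Hi. replace i with (S (i - 1)) at 1 by lia.
    replace (S i) with (S (S (i - 1))) by lia. apply Hopp. lia.
Qed.

Lemma path_straight_walk s p : is_path V adj s p -> straight_cond V opp s p ->
  straight_walk s p.
Proof.
  intros [Hadj _] Hopp. split; [exact Hadj|].
  intros i Hi. specialize (Hopp (S i)). rewrite Nat.sub_succ, Nat.sub_0_r in Hopp.
  apply Hopp. lia.
Qed.

Lemma straight_walk_adj_last s p : straight_walk s p -> 1 <= s ->
  adj (p s) (p (s - 1)).
Proof.
  intros [Hadj _] Hs. apply adj_sym.
  replace (p s) with (p (S (s - 1))) by (f_equal; lia). apply Hadj. lia.
Qed.

Lemma straight_walk_shift s p k m : straight_walk s p -> k + m <= s ->
  straight_walk m (fun i => p (k + i)).
Proof.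
  intros [Hadj Hopp] Hk. split; intros i Hi; rewrite <- ?plus_n_Sm.
  - apply Hadj. lia.
  - apply Hopp. lia.
Qed.

Lemma straight_walk_rev s p : straight_walk s p ->
  straight_walk s (fun i => p (s - i)).
Proof.
  intros [Hadj Hopp]. split; intros i Hi.
  - replace (s - i) with (S (s - S i)) by lia. apply adj_sym, Hadj. lia.
  - replace (s - i) with (S (S (s - S (S i)))) by lia.
    replace (s - S i) with (S (s - S (S i))) by lia. apply opp_sym, Hopp. lia.
Qed.

Definition pcons (a : V) (p : nat -> V) : nat -> V :=
  fun i => match i with 0 => a | S j => p j end.

Definition psnoc (p : nat -> V) (s : nat) (x : V) : nat -> V :=
  fun i => if Nat.leb i s then p i else x.

Lemma psnoc_le p s x i : i <= s -> psnoc p s x i = p i.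
Proof. intros Hi. unfold psnoc. destruct (Nat.leb_spec i s); [reflexivity | lia]. Qed.

Lemma psnoc_gt p s x i : s < i -> psnoc p s x i = x.
Proof. intros Hi. unfold psnoc. destruct (Nat.leb_spec i s); [lia | reflexivity]. Qed.

Lemma straight_walk_cons s p a : straight_walk s p -> adj a (p 0) ->
  (1 <= s -> opp (p 0) a (p 1)) -> straight_walk (S s) (pcons a p).
Proof.
  intros [Hadj Hopp] Ha Ho. split; intros [|i] Hi; simpl.
  - exact Ha.
  - apply Hadj. lia.
  - apply Ho. lia.
  - apply Hopp. lia.
Qed.

Lemma straight_walk_snoc s p x : straight_walk s p -> adj (p s) x ->
  (1 <= s -> opp (p s) (p (s - 1)) x) -> straight_walk (S s) (psnoc p s x).
Proof.
  intros [Hadj Hopp] Ha Ho. split; intros i Hi.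
  - destruct (Nat.eq_dec i s) as [->|Hne].
    + rewrite (psnoc_gt p s x (S s)), psnoc_le by lia. exact Ha.
    + rewrite !psnoc_le by lia. apply Hadj. lia.
  - destruct (Nat.eq_dec (S i) s) as [<-|Hne].
    + rewrite (psnoc_gt p (S i) x (S (S i))), !psnoc_le by lia.
      replace i with (S i - 1) at 2 by lia. apply Ho. lia.
    + rewrite !psnoc_le by lia. apply Hopp. lia.
Qed.

Lemma straight_walk_from k u : exists p, straight_walk k p /\ p 0 = u.
Proof.
  induction k as [|k [p [Hp Hu]]].
  - exists (fun _ => u). split; [split; intros; lia | reflexivity].
  - assert (Hext : exists x, adj (p k) x /\ (1 <= k -> opp (p k) (p (k - 1)) x)).
    { destruct k as [|k].
      - destruct (exists_neighbour (p 0)) as [x Hx]. exists x. split; [exact Hx | lia].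
      - pose proof (straight_walk_adj_last _ _ Hp ltac:(lia)) as Hprev.
        destruct (common_opposite_neighbour _ _ _ Hprev Hprev) as [x [Hx [Ho _]]].
        exists x. split; [exact Hx | intros _; apply opp_sym, Ho]. }
    destruct Hext as [x [Hx Ho]]. exists (psnoc p k x). split.
    + apply straight_walk_snoc; assumption.
    + rewrite psnoc_le by lia. exact Hu.
Qed.

(* Two straight walks of positive length with a common end extend by a
   common vertex h: 2-plumpness at the common end. *)
Lemma common_extension m A B : 1 <= m -> straight_walk m A -> straight_walk m B ->
  A m = B m ->
  exists h, straight_walk (S m) (psnoc A m h) /\ straight_walk (S m) (psnoc B m h).
Proof.
  intros Hm HA HB E.
  pose proof (straight_walk_adj_last _ _ HA Hm) as Ha.
  pose proof (straight_walk_adj_last _ _ HB Hm) as Hb. rewrite <- E in Hb.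
  destruct (common_opposite_neighbour _ _ _ Ha Hb) as [h [Hh [H1 H2]]].
  exists h. split; apply straight_walk_snoc; try assumption.
  - intros _. apply opp_sym, H1.
  - rewrite <- E. exact Hh.
  - intros _. rewrite <- E. apply opp_sym, H2.
Qed.

Lemma path_in_circuit_reflect m c c' s q : (forall t, t <= m -> c' t = c (m - t)) ->
  path_in_circuit V m c s q -> path_in_circuit V m c' s q.
Proof.
  intros Hc' [Hv He]. split.
  - intros i Hi. destruct (Hv i Hi) as [k [Hk E]].
    exists (m - k). split; [lia | rewrite Hc', <- E by lia; f_equal; lia].
  - intros i Hi. destruct (He i Hi) as [k [Hk Ek]].
    exists (m - S k). split; [lia|].
    rewrite !Hc' by lia. replace (m - (m - S k)) with (S k) by lia.
    replace (m - S (m - S k)) with k by lia. unfold same_edge in *. tauto.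
Qed.

Lemma straight_circuit_rev m c : straight_circuit V adj opp m c ->
  straight_circuit V adj opp m (fun t => c (m - t)).
Proof.
  intros [[[Hadj Hnb] [Hm H0]] Hst]. split; [split; [split|split]|].
  - intros t Ht. replace (m - t) with (S (m - S t)) by lia. apply adj_sym, Hadj. lia.
  - intros t Ht E. apply (Hnb (m - t + 2)); [lia|].
    replace (m - t + 2 - 2) with (m - t) by lia.
    replace (m - t + 2) with (m - (t - 2)) by lia. exact (eq_sym E).
  - exact Hm.
  - rewrite Nat.sub_0_r, Nat.sub_diag. auto.
  - intros s q Hq Hin. apply Hst; [exact Hq|].
    apply (path_in_circuit_reflect m (fun t => c (m - t))); [|exact Hin].
    intros t Ht. f_equal. lia.
Qed.

Variable n : nat.
Hypothesis Hn : 2 <= n.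

Definition opposite (u z : V) : Prop :=
  exists R, straight_walk n R /\ R 0 = u /\ R n = z.

Lemma opposite_vertices_of_opposite u z :
  opposite u z -> opposite_vertices V adj opp n u z.
Proof.
  intros [R [HR Hends]]. exists R. split; [apply straight_walk_path, HR | exact Hends].
Qed.

Hypothesis HVP2 : VP2 V adj opp n.

Section Circuit.
Variable c : nat -> V.
Hypothesis Hc : straight_circuit V adj opp (2 * n) c.

Lemma circuit_adj i : i < 2 * n -> adj (c i) (c (S i)).
Proof. exact (proj1 (proj1 (proj1 Hc)) i). Qed.

Lemma circuit_no_backtrack i : 2 <= i <= 2 * n -> c (i - 2) <> c i.
Proof. exact (proj2 (proj1 (proj1 Hc)) i). Qed.

Lemma circuit_closed : c 0 = c (2 * n).
Proof. exact (proj2 (proj2 (proj1 Hc))). Qed.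

Lemma circuit_straight s q : is_path V adj s q ->
  path_in_circuit V (2 * n) c s q -> straight_walk s q.
Proof. intros Hq Hin. apply path_straight_walk; [exact Hq | apply (proj2 Hc); assumption]. Qed.

Lemma circuit_segment_fwd s i : i + s <= 2 * n -> straight_walk s (fun t => c (i + t)).
Proof.
  intros Hi. apply circuit_straight; split.
  - intros t Ht. rewrite <- plus_n_Sm. apply circuit_adj. lia.
  - intros t Ht. replace (i + (t - 2)) with (i + t - 2) by lia.
    apply circuit_no_backtrack. lia.
  - intros t Ht. exists (i + t). split; [lia | reflexivity].
  - intros t Ht. exists (i + t). split; [lia | left; rewrite <- plus_n_Sm; auto].
Qed.

Lemma circuit_segment_bwd s j : s <= j <= 2 * n ->
  straight_walk s (fun t => c (j - t)).
Proof.
  intros Hj. apply circuit_straight; split.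
  - intros t Ht. replace (j - t) with (S (j - S t)) by lia. apply adj_sym, circuit_adj. lia.
  - intros t Ht E. apply (circuit_no_backtrack (j - t + 2)); [lia|].
    replace (j - t + 2 - 2) with (j - t) by lia.
    replace (j - t + 2) with (j - (t - 2)) by lia. exact (eq_sym E).
  - intros t Ht. exists (j - t). split; [lia | reflexivity].
  - intros t Ht. exists (j - S t). split; [lia | right; split; [reflexivity | f_equal; lia]].
Qed.

(* (VP2) forces the 2n vertices of a straight 2n-circuit to be distinct:
   two coinciding vertices would give two straight paths of length < n
   between the same endpoints around the two arcs. *)
Lemma circuit_vertices_distinct i j : i < j < 2 * n -> c i <> c j.
Proof.
  intros Hij E.
  assert (Hlen : j - i <= 2 * n - 2 \/ (i = 0 /\ j = 2 * n - 1)) by lia.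
  destruct Hlen as [Hlen | [-> ->]].
  - destruct (Nat.Even_or_Odd (j - i)) as [[m Hm] | [m Hm]].
    + (* both arcs from c i = c j to c (i+m) have length m, so they agree;
         then c (i+m-1) = c (i+m+1), which is backtracking *)
      assert (Hp : straight_walk m (fun t => c (j - t))) by (apply circuit_segment_bwd; lia).
      assert (Hq : straight_walk m (fun t => c (i + t))) by (apply circuit_segment_fwd; lia).
      destruct (HVP2 m ltac:(lia) _ (straight_walk_path _ _ Hp) m _ (le_n m)
                  (straight_walk_path _ _ Hq)) as [_ Heq].
      * rewrite Nat.add_0_r, Nat.sub_0_r. exact E.
      * f_equal; lia.
      * specialize (Heq (m - 1) ltac:(lia)). cbn beta in Heq.
        apply (circuit_no_backtrack (i + m + 1)); [lia|].
        replace (i + m + 1 - 2) with (i + (m - 1)) by lia. rewrite Heq. f_equal; lia.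
    + (* arcs of lengths m+1 and m between the same endpoints *)
      assert (Hp : straight_walk (S m) (fun t => c (j - t))) by (apply circuit_segment_bwd; lia).
      assert (Hq : straight_walk m (fun t => c (i + t))) by (apply circuit_segment_fwd; lia).
      destruct (HVP2 (S m) ltac:(lia) _ (straight_walk_path _ _ Hp) m _ ltac:(lia)
                  (straight_walk_path _ _ Hq)) as [Hsame_length _]; [| | lia].
      * rewrite Nat.add_0_r, Nat.sub_0_r. exact E.
      * f_equal; lia.
  - (* c 0 = c (2n-1) would be a loop at c (2n-1) *)
    apply (adj_irrefl (c (2 * n - 1))).
    pose proof (circuit_adj (2 * n - 1) ltac:(lia)) as Hw.
    replace (S (2 * n - 1)) with (2 * n) in Hw by lia.
    rewrite <- circuit_closed, E in Hw. exact Hw.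
Qed.

Definition unroll (t : nat) : V := c (t mod (2 * n)).

Lemma unroll_mod a b : a mod (2 * n) = b mod (2 * n) -> unroll a = unroll b.
Proof. unfold unroll. intros ->. reflexivity. Qed.

Lemma unroll_circuit k : k <= 2 * n -> unroll k = c k.
Proof.
  intros Hk. unfold unroll. destruct (Nat.eq_dec k (2 * n)) as [->|Hne].
  - rewrite Nat.Div0.mod_same. exact circuit_closed.
  - rewrite Nat.mod_small by lia. reflexivity.
Qed.

Lemma unroll_inj a b : unroll a = unroll b -> a mod (2 * n) = b mod (2 * n).
Proof.
  intros E. unfold unroll in E.
  pose proof (Nat.mod_upper_bound a (2 * n) ltac:(lia)).
  pose proof (Nat.mod_upper_bound b (2 * n) ltac:(lia)).
  destruct (Nat.lt_trichotomy (a mod (2 * n)) (b mod (2 * n))) as [Hlt|[Heq|Hgt]];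
    [exfalso | exact Heq | exfalso].
  - apply (circuit_vertices_distinct (a mod (2 * n)) (b mod (2 * n))); [lia | exact E].
  - apply (circuit_vertices_distinct (b mod (2 * n)) (a mod (2 * n))); [lia | exact (eq_sym E)].
Qed.

Lemma unroll_succ a b : unroll a = unroll b -> unroll (S a) = unroll (S b).
Proof.
  intros E. apply unroll_mod. rewrite <- (Nat.add_1_r a), <- (Nat.add_1_r b).
  apply mod_add_compat, unroll_inj, E.
Qed.

Lemma unroll_pred a b : unroll (S a) = unroll (S b) -> unroll a = unroll b.
Proof.
  intros E. apply unroll_mod, (mod_succ_cancel (2 * n)); [lia | apply unroll_inj, E].
Qed.

Lemma unroll_period t : unroll (t + 2 * n) = unroll t.
Proof. apply unroll_mod. rewrite <- (Nat.mul_1_l (2 * n)) at 1. apply Nat.Div0.mod_add. Qed.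

Lemma unroll_reduce t : unroll t = unroll (t mod (2 * n)).
Proof. apply unroll_mod. symmetry. apply Nat.Div0.mod_mod. Qed.

Lemma unroll_adj t : adj (unroll t) (unroll (S t)).
Proof.
  pose proof (Nat.mod_upper_bound t (2 * n) ltac:(lia)).
  rewrite unroll_reduce, (unroll_succ _ _ (unroll_reduce t)), !unroll_circuit by lia.
  apply circuit_adj. lia.
Qed.

Lemma unroll_edge t y : circ_edge V (2 * n) c (unroll (S t)) y ->
  y = unroll t \/ y = unroll (S (S t)).
Proof.
  intros [k [Hk [[E1 E2] | [E1 E2]]]].
  - rewrite <- (unroll_circuit k) in E1 by lia.
    rewrite <- (unroll_circuit (S k)) in E2 by lia. subst y.
    right. apply unroll_succ. exact E1.
  - rewrite <- (unroll_circuit k) in E1 by lia.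
    rewrite <- (unroll_circuit (S k)) in E2 by lia. subst y.
    left. apply unroll_pred. exact E2.
Qed.

Lemma unroll_straight t : opp (unroll (S t)) (unroll t) (unroll (S (S t))).
Proof.
  assert (Hnb : unroll t <> unroll (S (S t))).
  { intros E. apply unroll_inj in E. replace (S (S t)) with (t + 2) in E by lia.
    apply (mod_shift_neq (2 * n) t 2); [lia | exact E]. }
  assert (Hs : straight_walk 2 (fun i => unroll (t + i))).
  { apply circuit_straight; split.
    - intros i Hi. rewrite <- plus_n_Sm. apply unroll_adj.
    - intros i Hi. replace (t + (i - 2)) with t by lia.
      replace (t + i) with (S (S t)) by lia. exact Hnb.
    - intros i Hi. pose proof (Nat.mod_upper_bound (t + i) (2 * n) ltac:(lia)).
      exists ((t + i) mod (2 * n)). split; [lia | rewrite unroll_reduce, unroll_circuit by lia; auto].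
    - intros i Hi. pose proof (Nat.mod_upper_bound (t + i) (2 * n) ltac:(lia)).
      exists ((t + i) mod (2 * n)). split; [lia | left; split].
      + rewrite unroll_reduce, unroll_circuit by lia. reflexivity.
      + rewrite <- plus_n_Sm, (unroll_succ _ _ (unroll_reduce (t + i))), unroll_circuit by lia.
        reflexivity. }
  destruct Hs as [_ Hs]. specialize (Hs 0 ltac:(lia)). cbn beta in Hs.
  replace (t + 0) with t in Hs by lia. replace (t + 1) with (S t) in Hs by lia.
  replace (t + 2) with (S (S t)) in Hs by lia. exact Hs.
Qed.

Lemma circuit_wrap P k0 : path_in_circuit V (2 * n) c (S n) P ->
  straight_walk (S n) P -> k0 < 2 * n -> c k0 = P 0 -> c (S k0) = P 1 ->
  exists K, straight_walk (S (2 * n)) K /\ (forall j, j <= S n -> K j = P j) /\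
            K (2 * n) = P 0 /\ K (S (2 * n)) = P 1.
Proof.
  intros [_ Hedge] HP Hk E0 E1.
  rewrite <- unroll_circuit in E0, E1 by lia.
  assert (Hfollow : forall j, j <= n -> P j = unroll (k0 + j) /\ P (S j) = unroll (k0 + S j)).
  { induction j as [|j IH]; intros Hj.
    - rewrite Nat.add_0_r, Nat.add_1_r. auto.
    - destruct IH as [IH1 IH2]; [lia|]. split; [exact IH2|].
      pose proof (Hedge (S j) ltac:(lia)) as Hin.
      rewrite IH2, <- plus_n_Sm in Hin.
      destruct (unroll_edge _ _ Hin) as [Eback | Efwd].
      + exfalso. apply (straight_walk_no_backtrack _ _ HP j); [lia|].
        rewrite IH1, Eback. reflexivity.
      + rewrite Efwd. f_equal. lia. }
  exists (fun i => unroll (k0 + i)). split; [split | split; [|split]].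
  - intros i Hi. rewrite <- plus_n_Sm. apply unroll_adj.
  - intros i Hi. rewrite <- !plus_n_Sm. apply unroll_straight.
  - intros [|j] Hj.
    + exact (eq_sym (proj1 (Hfollow 0 ltac:(lia)))).
    + exact (eq_sym (proj2 (Hfollow j ltac:(lia)))).
  - rewrite unroll_period. exact E0.
  - replace (k0 + S (2 * n)) with (S k0 + 2 * n) by lia.
    rewrite unroll_period. exact E1.
Qed.

End Circuit.

Hypothesis HVP3 : VP3 V adj opp n.

Lemma straight_walk_wraps P : straight_walk (S n) P ->
  exists K, straight_walk (S (2 * n)) K /\ (forall j, j <= S n -> K j = P j) /\
            K (2 * n) = P 0 /\ K (S (2 * n)) = P 1.
Proof.
  intros HP.
  destruct (HVP3 P (straight_walk_path _ _ HP)) as [c [Hc Hin]].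
  destruct (proj2 Hin 0 ltac:(lia)) as [k [Hk [[E0 E1] | [E1 E0]]]].
  - exact (circuit_wrap c Hc P k Hin HP Hk E0 E1).
  - apply (circuit_wrap (fun t => c (2 * n - t)) (straight_circuit_rev _ _ Hc) P (2 * n - S k));
      [ | exact HP | lia | rewrite <- E0; f_equal; lia | rewrite <- E1; f_equal; lia].
    apply (path_in_circuit_reflect _ c); [intros; reflexivity | exact Hin].
Qed.

(* Going around the circuit of a straight (n+1)-path P the other way
   yields a root from P 1 to P (n+1) through P 0. *)
Lemma root_around P : straight_walk (S n) P ->
  exists Y, straight_walk n Y /\ Y 0 = P 1 /\ Y 1 = P 0 /\ Y n = P (S n).
Proof.
  intros HP.
  destruct (straight_walk_wraps P HP) as [K [HK [HKP [HK0 HK1]]]].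
  exists (fun i => K (S n + (n - i))). split; [|split; [|split]].
  - apply (straight_walk_rev n (fun i => K (S n + i))), (straight_walk_shift _ _ _ _ HK). lia.
  - rewrite <- HK1. f_equal; lia.
  - rewrite <- HK0. f_equal; lia.
  - rewrite <- HKP by lia. f_equal; lia.
Qed.

(* A root with fixed endpoints can be turned at its start to any vertex
   opposite its second vertex ... *)
Lemma root_turn R a : straight_walk n R -> opp (R 0) (R 1) a ->
  exists R', straight_walk n R' /\ R' 0 = R 0 /\ R' 1 = a /\ R' n = R n.
Proof.
  intros HR Ho.
  destruct (root_around (pcons a R)) as [Y [HY [Y0 [Y1 Yn]]]].
  { apply straight_walk_cons; [exact HR | apply adj_sym, (opp_adj _ _ _ Ho) | ].
    intros _. apply opp_sym, Ho. }
  exists Y. auto.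
Qed.

(* ... and hence, turning twice, to any neighbour of its start. *)
Lemma root_second_vertex u z a : opposite u z -> adj u a ->
  exists R, straight_walk n R /\ R 0 = u /\ R 1 = a /\ R n = z.
Proof.
  intros [R [HR [<- <-]]] Ha.
  assert (H1 : adj (R 0) (R 1)) by (apply (proj1 HR); lia).
  destruct (common_opposite_neighbour _ _ _ H1 Ha) as [b [_ [Hb1 Hba]]].
  destruct (root_turn R b HR (opp_sym _ _ _ Hb1)) as [R1 [HR1 [E0 [E1 En]]]].
  destruct (root_turn R1 a HR1) as [R2 [HR2 [F0 [F1 Fn]]]]; [rewrite E0, E1; exact Hba|].
  exists R2. rewrite F0, Fn, E0, En. auto.
Qed.

Lemma root_slide R h : straight_walk n R -> adj (R n) h -> opp (R n) (R (n - 1)) h ->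
  exists Y, straight_walk n Y /\ Y 0 = R 1 /\ Y 1 = R 0 /\ Y n = h.
Proof.
  intros HR Ha Ho.
  destruct (root_around (psnoc R n h)) as [Y [HY [Y0 [Y1 Yn]]]].
  { apply straight_walk_snoc; auto. }
  rewrite !psnoc_le in Y0, Y1 by lia. rewrite psnoc_gt in Yn by lia.
  exists Y. auto.
Qed.

Definition common_opposite (u v : V) : Prop :=
  exists z, opposite u z /\ opposite v z.

(* Roots with a common end: their second vertices have a common opposite,
   obtained by extending the tails (of length n-1) by a common vertex. *)
Lemma tails_common_opposite A B : straight_walk n A -> straight_walk n B ->
  A n = B n -> common_opposite (A 1) (B 1).
Proof.
  intros HA HB E.
  pose proof (straight_walk_shift _ _ 1 (n - 1) HA ltac:(lia)) as HA'.
  pose proof (straight_walk_shift _ _ 1 (n - 1) HB ltac:(lia)) as HB'.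
  destruct (common_extension (n - 1) _ _ ltac:(lia) HA' HB') as [h [H1 H2]].
  { replace (1 + (n - 1)) with n by lia. exact E. }
  replace (S (n - 1)) with n in H1, H2 by lia.
  exists h. split.
  - exists (psnoc (fun i => A (1 + i)) (n - 1) h).
    split; [exact H1 | split; [rewrite psnoc_le by lia; reflexivity | apply psnoc_gt; lia]].
  - exists (psnoc (fun i => B (1 + i)) (n - 1) h).
    split; [exact H2 | split; [rewrite psnoc_le by lia; reflexivity | apply psnoc_gt; lia]].
Qed.

Lemma common_opposite_straight_step u w c w' :
  common_opposite u w -> opp c w w' -> common_opposite u w'.
Proof.
  intros [z [[U [HU [U0 Un]]] Hwz]] Hopp.
  destruct (opp_adj _ _ _ Hopp) as [Hcw _].
  destruct (root_second_vertex w z c Hwz (adj_sym _ _ Hcw)) as [W [HW [W0 [W1 Wn]]]].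
  pose proof (straight_walk_adj_last _ _ HU ltac:(lia)) as HUz.
  pose proof (straight_walk_adj_last _ _ HW ltac:(lia)) as HWz.
  rewrite Un in HUz. rewrite Wn in HWz.
  destruct (common_opposite_neighbour _ _ _ HUz HWz) as [h [Hh [HhU HhW]]].
  destruct (root_slide U h HU) as [YU [HYU [_ [YU1 YUn]]]];
    [rewrite Un; exact Hh | rewrite Un; apply opp_sym, HhU |].
  destruct (root_slide W h HW) as [YW [HYW [YW0 [YW1 YWn]]]];
    [rewrite Wn; exact Hh | rewrite Wn; apply opp_sym, HhW |].
  destruct (root_turn YW w' HYW) as [YX [HYX [_ [YX1 YXn]]]];
    [rewrite YW0, YW1, W1, W0; exact Hopp |].
  rewrite <- U0, <- YU1, <- YX1.
  apply tails_common_opposite; [exact HYU | exact HYX | congruence].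
Qed.

(* Plumpness at c reduces an arbitrary 2-step w - c - w' to two straight ones. *)
Lemma common_opposite_step u w c w' :
  common_opposite u w -> adj w c -> adj c w' -> common_opposite u w'.
Proof.
  intros Huw Hwc Hcw'.
  destruct (common_opposite_neighbour c w w' (adj_sym _ _ Hwc) Hcw') as [w'' [_ [H1 H2]]].
  apply (common_opposite_straight_step u w'' c w'); [|exact H2].
  exact (common_opposite_straight_step u w c w'' Huw (opp_sym _ _ _ H1)).
Qed.

Lemma even_walk_common_opposite m p : walk V adj (2 * m) p ->
  common_opposite (p 0) (p (2 * m)).
Proof.
  induction m as [|m IH]; intros Hp.
  - destruct (straight_walk_from n (p 0)) as [R [HR H0]].
    exists (R n). split; exists R; auto.
  - apply (common_opposite_step _ (p (2 * m)) (p (S (2 * m)))).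
    + apply IH. intros i Hi. apply Hp. lia.
    + apply Hp. lia.
    + replace (2 * S m) with (S (S (2 * m))) by lia. apply Hp. lia.
Qed.

Lemma even_distance_common_opposite u v d : is_dist V adj u v d -> Nat.even d = true ->
  exists w, opposite_vertices V adj opp n u w /\ opposite_vertices V adj opp n v w.
Proof.
  intros [[p [Hp [<- <-]]] _] Hev. apply Nat.even_spec in Hev. destruct Hev as [m ->].
  destruct (even_walk_common_opposite m p Hp) as [w [Hu Hv]].
  exists w. split; apply opposite_vertices_of_opposite; assumption.
Qed.

(* A common opposite vertex z of a and x becomes, for any edges {a,b} and
   {x,y}, a common opposite edge {z,f}: turn the roots to pass through b
   and y, then extend both by a common last vertex f. *)
Lemma common_opposite_edge a b x y : common_opposite a x -> adj a b -> adj x y ->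
  exists z f, adj z f /\ opposite_edges V adj opp n a b z f /\
              opposite_edges V adj opp n x y z f.
Proof.
  intros [z [Ha Hx]] Hab Hxy.
  destruct (root_second_vertex a z b Ha Hab) as [P [HP [P0 [P1 Pn]]]].
  destruct (root_second_vertex x z y Hx Hxy) as [Q [HQ [Q0 [Q1 Qn]]]].
  destruct (common_extension n P Q ltac:(lia) HP HQ ltac:(congruence)) as [f [HPf HQf]].
  exists z, f. split; [|split].
  - pose proof (proj1 HPf n ltac:(lia)) as Hzf.
    rewrite psnoc_le, psnoc_gt, Pn in Hzf by lia. exact Hzf.
  - exists (psnoc P n f). split; [apply straight_walk_path, HPf|].
    rewrite !psnoc_le, psnoc_gt by lia. split; left; auto.
  - exists (psnoc Q n f). split; [apply straight_walk_path, HQf|].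
    rewrite !psnoc_le, psnoc_gt by lia. split; left; auto.
Qed.

Hypothesis Hconn : connected V adj.

Lemma even_walk_to_edge u a b : adj a b ->
  exists x y, same_edge V a b x y /\ adj x y /\
    exists m p, walk V adj (2 * m) p /\ p 0 = u /\ p (2 * m) = x.
Proof.
  intros Hab. destruct (Hconn u a) as [s [p [Hp [P0 Ps]]]].
  destruct (Nat.Even_or_Odd s) as [[m ->] | [m ->]].
  - exists a, b. split; [left; auto | split; [exact Hab | exists m, p; auto]].
  - exists b, a. split; [right; auto | split; [apply adj_sym, Hab |]].
    exists (S m), (psnoc p (2 * m + 1) b). split; [|split].
    + intros i Hi. destruct (Nat.eq_dec i (2 * m + 1)) as [->|Hne].
      * rewrite psnoc_le, psnoc_gt, Ps by lia. exact Hab.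
      * rewrite !psnoc_le by lia. apply Hp. lia.
    + rewrite psnoc_le by lia. exact P0.
    + apply psnoc_gt. lia.
Qed.

Lemma edges_common_opposite a1 b1 a2 b2 : adj a1 b1 -> adj a2 b2 ->
  exists c d, adj c d /\ opposite_edges V adj opp n a1 b1 c d /\
              opposite_edges V adj opp n a2 b2 c d.
Proof.
  intros H1 H2.
  destruct (even_walk_to_edge a1 a2 b2 H2) as [x [y [Hxy [Hadj [m [p [Hp [P0 Pm]]]]]]]].
  destruct (common_opposite_edge a1 b1 x y) as [z [f [Hzf [E1 [q [Hq [Eq1 Eq2]]]]]]];
    [rewrite <- P0, <- Pm; apply even_walk_common_opposite, Hp | exact H1 | exact Hadj |].
  exists z, f. split; [exact Hzf | split; [exact E1 | exists q; split; [exact Hq | split; [|exact Eq2]]]].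
  destruct Hxy as [[-> ->] | [-> ->]]; unfold same_edge in *; tauto.
Qed.

End Veldkamp.

Theorem proposition2p12 (V : Type) (adj : V -> V -> Prop)
    (opp : V -> V -> V -> Prop) (n : nat) :
  veldkamp_ngon V adj opp n ->
  (forall a1 b1 a2 b2, adj a1 b1 -> adj a2 b2 ->
     exists c d, adj c d /\
       opposite_edges V adj opp n a1 b1 c d /\
       opposite_edges V adj opp n a2 b2 c d) /\
  (forall u v d, is_dist V adj u v d -> Nat.even d = true ->
     exists w, opposite_vertices V adj opp n u w /\
               opposite_vertices V adj opp n v w).
Proof.
  intros [Hn [HG [Hconn [_ [HVP2 HVP3]]]]]. split.
  - exact (edges_common_opposite V adj opp HG n Hn HVP2 HVP3 Hconn).
  - exact (even_distance_common_opposite V adj opp HG n Hn HVP2 HVP3).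
Qed.
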